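(* Let $q$ be an odd prime power. For $1\leq i\leq k$, let $b_i\in\mathbb{F}_q$ and let $l_i,s_i$ be positive integers with $l_i$ odd; let $\delta\in\mathbb{F}_{q^2}$. Let $\varepsilon$ be a primitive element of $\mathbb{F}_{q^2}$ and $t=(q+1)/2$. Then the polynomial $$P(x)=-x+\sum_{i=1}^k b_i\varepsilon^{tl_i}\left((x^q+x+\delta)^{s_i}+(x^q+x+\delta)^{qs_i}\right)$$ permutes $\mathbb{F}_{q^2}$, and its compositional inverse over $\mathbb{F}_{q^2}$ is $$P^{-1}(x)=-x+\sum_{i=1}^k b_i\varepsilon^{tl_i}\left((-x^q-x+\delta)^{s_i}+(-x^q-x+\delta)^{qs_i}\right).$$
   Context: The compositional inverse of a permutation polynomial $f$ of $\mathbb{F}_{Q}$ is the unique polynomial $f^{-1}$ (modulo $x^Q-x$) with $f(f^{-1}(c))=f^{-1}(f(c))=c$ for all $c\in\mathbb{F}_Q$. *)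

From HB Require Import structures.
From mathcomp Require Import all_boot all_order all_algebra all_field.
Set Implicit Arguments. Unset Strict Implicit. Unset Printing Implicit Defensive.
Import GRing.Theory.
Local Open Scope ring_scope.

Definition P38 (F : finFieldType) (q k t : nat) (b : 'I_k -> F) (l s : 'I_k -> nat)
  (eps delta : F) (x : F) : F :=
  - x + \sum_(i < k) b i * eps ^+ (t * l i) *
        ((x ^+ q + x + delta) ^+ s i + (x ^+ q + x + delta) ^+ (q * s i)).

Definition P38inv (F : finFieldType) (q k t : nat) (b : 'I_k -> F) (l s : 'I_k -> nat)
  (eps delta : F) (x : F) : F :=
  - x + \sum_(i < k) b i * eps ^+ (t * l i) *
        ((- x ^+ q - x + delta) ^+ s i + (- x ^+ q - x + delta) ^+ (q * s i)).

(* Write Tr x = x^q + x.  Since l_i is odd and eps^((q^2-1)/2) = -1, every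
   coefficient c_i = b_i eps^(t l_i) satisfies c_i^q = -c_i, whereas
   u^(s_i) + u^(q s_i) is fixed by the Frobenius x |-> x^q of F_(q^2).  Hence
   the sum S(u) occurring in P has S(u)^q = -S(u), i.e. Tr (S u) = 0, and
   P x = -x + S (Tr x + delta) satisfies Tr (P x) = -Tr x.  The same holds for
   the candidate inverse, and then each map undoes the other, because the
   argument of S is recovered from the trace of the image. *)

From HB Require Import structures.
From mathcomp Require Import all_boot all_order all_algebra all_field.
From mathcomp Require Import zify.
Set Implicit Arguments. Unset Strict Implicit. Unset Printing Implicit Defensive.
Import GRing.Theory.
Local Open Scope ring_scope.

Section TraceTwist.

Variables (V : zmodType) (phi S : V -> V) (delta : V).
Hypothesis phiD : {morph phi : x y / x + y}.
Hypothesis phiN : {morph phi : x / - x}.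
Hypothesis phi_antiS : forall u, phi (S u) = - S u.

Definition twist x := - x + S (phi x + x + delta).
Definition untwist x := - x + S (- phi x - x + delta).

Lemma trace_neg_addS x u : phi (- x + S u) + (- x + S u) = - (phi x + x).
Proof. by rewrite phiD phiN phi_antiS addrACA addNr addr0 opprD. Qed.

Lemma twistK : cancel twist untwist.
Proof.
move=> x; rewrite /untwist -opprD trace_neg_addS opprK.
by rewrite /twist opprD opprK subrK.
Qed.

Lemma untwistK : cancel untwist twist.
Proof.
move=> x; rewrite /twist trace_neg_addS [- (phi x + x)]opprD.
by rewrite /untwist opprD opprK subrK.
Qed.

End TraceTwist.

Lemma prim_root_expr_half (R : idomainType) (m : nat) (z : R) :
  (m.*2).-primitive_root z -> z ^+ m = -1.
Proof.
move=> prim_z; have m_gt0 : (0 < m)%N by rewrite -double_gt0 (prim_order_gt0 prim_z).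
have : (z ^+ m) ^+ 2 == 1 by rewrite -exprM muln2 -(prim_order_dvd prim_z).
rewrite sqrf_eq1 => /orP[|/eqP //].
by rewrite -(prim_order_dvd prim_z) => /dvdn_leq; rewrite -addnn; lia.
Qed.

Lemma prim_root_expr_halfS_anti (R : idomainType) (q : nat) (eps : R) :
  odd q -> (q ^ 2 - 1)%N.-primitive_root eps ->
  (eps ^+ (q.+1 %/ 2)) ^+ q = - eps ^+ (q.+1 %/ 2).
Proof.
move=> q_odd prim_eps.
have [r q_eq] : exists r, q = r.*2.+1.
  by exists q./2; rewrite -[LHS]odd_double_half q_odd.
have -> : (q.+1 %/ 2)%N = r.+1 by rewrite q_eq -[r.*2.+2]doubleS -muln2 mulnK.
have order_eq : (q ^ 2 - 1)%N = (r.+1 * (q - 1)).*2 by rewrite q_eq; nia.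
rewrite order_eq in prim_eps.
have -> : q = (1 + (q - 1))%N by rewrite q_eq; lia.
by rewrite -exprM mulnDr muln1 exprD (prim_root_expr_half prim_eps) mulrN1.
Qed.

Lemma expr_odd_anti (R : pzRingType) (q l : nat) (w : R) :
  odd l -> w ^+ q = - w -> (w ^+ l) ^+ q = - w ^+ l.
Proof. by move=> l_odd w_anti; rewrite exprAC w_anti exprNn -signr_odd l_odd mulN1r. Qed.

Section Frobenius.

Variables (F : finFieldType) (q : nat).
Hypothesis q_pchar : [pchar F].-nat q.
Hypothesis cardF : #|F| = (q ^ 2)%N.

Lemma frobD : {morph (fun x : F => x ^+ q) : x y / x + y}.
Proof. by move=> x y; exact: exprDn_pchar. Qed.

Lemma frobN : {morph (fun x : F => x ^+ q) : x / - x}.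
Proof. by move=> x; exact: exprNn_pchar. Qed.

Lemma frobK (x : F) : (x ^+ q) ^+ q = x.
Proof. by rewrite -exprM mulnn -cardF expf_card. Qed.

Lemma frob_sum (I : finType) (f : I -> F) : (\sum_i f i) ^+ q = \sum_i f i ^+ q.
Proof.
apply: (big_morph _ frobD); rewrite expr0n.
by case/andP: q_pchar => /lt0n_neq0/negPf ->.
Qed.

Lemma frob_anti_sum (I : finType) (c : I -> F) (s : I -> nat) (u : F) :
  (forall i, c i ^+ q = - c i) ->
  (\sum_i c i * (u ^+ s i + u ^+ (q * s i))) ^+ q
    = - \sum_i c i * (u ^+ s i + u ^+ (q * s i)).
Proof.
move=> c_anti; rewrite frob_sum -sumrN; apply: eq_bigr => i _.
rewrite exprMn c_anti mulNr frobD mulnC !exprM frobK addrC.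
by rewrite -!exprM mulnC.
Qed.

End Frobenius.

Theorem theorem3p8 (F : finFieldType) (q : nat)
  (hq_pp : exists p e : nat, [/\ prime p, (0 < e)%N & q = p ^ e]%N)
  (hq_odd : odd q) (hF : #|F| = (q ^ 2)%N)
  (k : nat) (b : 'I_k -> F) (l s : 'I_k -> nat)
  (hb : forall i, b i ^+ q = b i)
  (hl : forall i, (0 < l i)%N && odd (l i))
  (hs : forall i, (0 < s i)%N)
  (delta eps : F) (heps : (q ^ 2 - 1)%N.-primitive_root eps) :
  let t := (q.+1 %/ 2)%N in
  bijective (P38 q t b l s eps delta) /\
  cancel (P38 q t b l s eps delta) (P38inv q t b l s eps delta) /\
  cancel (P38inv q t b l s eps delta) (P38 q t b l s eps delta).
Proof.
move=> t.
have q_pchar : [pchar F].-nat q.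
  have [p [e [p_prime _ q_eq]]] := hq_pp.
  have p_char : p \in [pchar F].
    by apply: (card_finPcharP (n := (e * 2)%N)); rewrite // hF q_eq expnM.
  by rewrite q_eq pnatX pnatE // p_char.
have w_anti := prim_root_expr_halfS_anti hq_odd heps.
have c_anti i : (b i * eps ^+ (t * l i)) ^+ q = - (b i * eps ^+ (t * l i)).
  by rewrite exprM exprMn hb expr_odd_anti ?mulrN //; case/andP: (hl i).
pose S u := \sum_(i < k) b i * eps ^+ (t * l i) * (u ^+ s i + u ^+ (q * s i)).
have S_anti u : S u ^+ q = - S u by exact: frob_anti_sum.
have P_can := twistK delta (frobD q_pchar) (frobN q_pchar) S_anti.
have Pinv_can := untwistK delta (frobD q_pchar) (frobN q_pchar) S_anti.
by split; [exists (untwist (fun x => x ^+ q) S delta) | split].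
Qed.
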